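(* Let $(A,\circ)$ be a Novikov algebra and $\{a,b\}=a\circ b+b\circ a$. Then for all $a,b,c,d\in A$, $$\{\{a,b\},\{c,d\}\}-\{\{a,d\},\{c,b\}\}=\{d\circ c,a\circ b\}+\{c\circ d,b\circ a\}-\{b\circ c,a\circ d\}-\{c\circ b,d\circ a\}.$$
   Context: A (right) Novikov algebra is an algebra $(A,\circ)$ satisfying $a\circ(b\circ c)-(a\circ b)\circ c=a\circ(c\circ b)-(a\circ c)\circ b$ and $a\circ(b\circ c)=b\circ(a\circ c)$ for all $a,b,c$. *)

From mathcomp Require Import all_boot all_algebra.
Set Implicit Arguments. Unset Strict Implicit. Unset Printing Implicit Defensive.
Import GRing.Theory.
Local Open Scope ring_scope.

Definition bilinear_prod (K : fieldType) (V : lmodType K) (m : V -> V -> V) : Prop :=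
  (forall a b c, m (a + b) c = m a c + m b c) /\
  (forall a b c, m a (b + c) = m a b + m a c) /\
  (forall (k : K) a b, m (k *: a) b = k *: m a b) /\
  (forall (k : K) a b, m a (k *: b) = k *: m a b).

(* Right Novikov identities. *)
Definition novikov (K : fieldType) (V : lmodType K) (m : V -> V -> V) : Prop :=
  bilinear_prod m /\
  (forall a b c, m a (m b c) - m (m a b) c = m a (m c b) - m (m a c) b) /\
  (forall a b c, m a (m b c) = m b (m a c)).

Definition acomm (K : fieldType) (V : lmodType K) (m : V -> V -> V) (a b : V) : V :=
  m a b + m b a.

From HB Require Import structures.
From mathcomp Require Import all_boot all_algebra ring.
Import GRing.Theory.
Local Open Scope ring_scope.

(* Expanding both sides by bilinearity, LHS - RHS becomes
   [S(a,b,c,d) + S(b,a,d,c)] with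
   [S(x,y,z,w) = ((x y)(z w) - (x w)(z y)) + ((z w)(x y) - (z y)(x w))].
   Left commutativity gives [(x y)(z w) = z((x y) w)], and right symmetry
   then turns [(x y)(z w) - (x w)(z y)] into [z(x(y w - w y))]; the two
   halves of [S] are thus [z(x u)] and [x(z(-u))], which cancel by left
   commutativity once more. *)

(* Identities in an abelian group [V] are decided by [ring] once [V] is
   embedded additively into the trivial extension [int * V], the commutative
   ring with [(k, u)(l, v) = (k l, l u + k v)]. *)
Section TrivialExtension.

Variable V : zmodType.

Definition triv_ext := (int * V)%type.
HB.instance Definition _ := GRing.Zmodule.on triv_ext.

Definition triv_ext_mul (x y : triv_ext) : triv_ext :=
  (x.1 * y.1, x.2 *~ y.1 + y.2 *~ x.1).

Definition triv_ext_one : triv_ext := (1, 0).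

Lemma triv_ext_mulA : associative triv_ext_mul.
Proof.
case=> a u [b v] [c w]; rewrite /triv_ext_mul /=; congr (_, _).
  by rewrite mulrA.
by rewrite !mulrzDl -!mulrzA [c * a]mulrC [b * a]mulrC addrA.
Qed.

Lemma triv_ext_mulC : commutative triv_ext_mul.
Proof. by case=> a u [b v]; rewrite /triv_ext_mul /= mulrC addrC. Qed.

Lemma triv_ext_mul1 : left_id triv_ext_one triv_ext_mul.
Proof. by case=> a u; rewrite /triv_ext_mul /= mul1r mul0rz add0r. Qed.

Lemma triv_ext_mulDl : left_distributive triv_ext_mul +%R.
Proof.
case=> a u [b v] [c w]; rewrite /triv_ext_mul /=; congr (_, _).
  by rewrite mulrDl.
by rewrite mulrzDr mulrzDl addrACA.
Qed.

Lemma triv_ext_one_neq0 : triv_ext_one != 0.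
Proof. by []. Qed.

HB.instance Definition _ := GRing.Zmodule_isComNzRing.Build triv_ext
  triv_ext_mulA triv_ext_mulC triv_ext_mul1 triv_ext_mulDl triv_ext_one_neq0.

Definition triv_ext_in (v : V) : triv_ext := (0, v).

Lemma triv_ext_in_is_zmod_morphism : zmod_morphism triv_ext_in.
Proof. by move=> u v; rewrite /triv_ext_in; congr (_, _); rewrite subr0. Qed.

HB.instance Definition _ := GRing.isZmodMorphism.Build V triv_ext triv_ext_in
  triv_ext_in_is_zmod_morphism.

Lemma triv_ext_in_inj : injective triv_ext_in.
Proof. by move=> u v [->]. Qed.

End TrivialExtension.

Section Bilinear.

Context {K : fieldType} {V : lmodType K} {m : V -> V -> V}.
Hypothesis hm : bilinear_prod m.

Lemma bilinear_prodDl x y z : m (x + y) z = m x z + m y z.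
Proof. by case: hm. Qed.

Lemma bilinear_prodDr x y z : m x (y + z) = m x y + m x z.
Proof. by case: hm => _ []. Qed.

Lemma bilinear_prodNr x y : m x (- y) = - m x y.
Proof. by case: hm => _ [_ [_ scale_r]]; rewrite -scaleN1r scale_r scaleN1r. Qed.

Lemma bilinear_prodBr x y z : m x (y - z) = m x y - m x z.
Proof. by rewrite bilinear_prodDr bilinear_prodNr. Qed.

End Bilinear.

Section Novikov.

Context {K : fieldType} {V : lmodType K} {m : V -> V -> V}.
Hypothesis hN : novikov m.

Lemma novikov_mul_swap x y z w :
  m (m x y) (m z w) - m (m x w) (m z y) = m z (m x (m y w - m w y)).
Proof.
have [hm [right_symm left_comm]] := hN.
have assoc_swap : m (m x y) w - m (m x w) y = m x (m y w - m w y).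
  rewrite (bilinear_prodBr hm) (canRL (subrK _) (right_symm x y w)).
  by apply: triv_ext_in_inj; ring.
by rewrite (left_comm (m x y)) (left_comm (m x w)) -!(bilinear_prodBr hm) assoc_swap.
Qed.

Lemma novikov_mul_swap_cancel x y z w :
  (m (m x y) (m z w) - m (m x w) (m z y))
  + (m (m z w) (m x y) - m (m z y) (m x w)) = 0.
Proof.
have [hm [_ left_comm]] := hN.
rewrite !novikov_mul_swap (left_comm x z) -opprB.
by rewrite !(bilinear_prodNr hm) addNr.
Qed.

End Novikov.

Theorem mainTheorem11 (K : fieldType) (V : lmodType K) (m : V -> V -> V)
  (hN : novikov m) (a b c d : V) :
  acomm m (acomm m a b) (acomm m c d) - acomm m (acomm m a d) (acomm m c b)
  = acomm m (m d c) (m a b) + acomm m (m c d) (m b a)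
    - acomm m (m b c) (m a d) - acomm m (m c b) (m d a).
Proof.
have [hm _] := hN.
apply: subr0_eq.
rewrite -(novikov_mul_swap_cancel hN a b c d) -[RHS]addr0.
rewrite -(novikov_mul_swap_cancel hN b a d c).
rewrite /acomm !(bilinear_prodDl hm, bilinear_prodDr hm).
by apply: triv_ext_in_inj; ring.
Qed.
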